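(* $\mathfrak{P}_4=\mathfrak{S}_4$. That is, for a real vector $(c_\lambda)_{\lambda\vdash 4}$, the symmetric quartic $\sum_{\lambda\vdash 4}c_\lambda p^{(n)}_\lambda$ is nonnegative on $\mathbb{R}^n$ for every $n\ge 4$ if and only if it is a sum of squares of real forms for every $n\ge 4$.
   Context: For $n\ge 1$, $i\ge1$ let $p_i^{(n)}=\frac1n(x_1^i+\dots+x_n^i)$, and for a partition $\lambda=(\lambda_1,\dots,\lambda_l)$ of $4$ let $p^{(n)}_\lambda=\prod_i p^{(n)}_{\lambda_i}$. The partitions of $4$ are $(4),(3,1),(2,2),(2,1,1),(1,1,1,1)$. $\mathfrak{P}_4$ (resp. $\mathfrak{S}_4$) is the set of $(c_\lambda)\in\mathbb{R}^5$ such that $\sum_\lambda c_\lambda p^{(n)}_\lambda$ is nonnegative (resp. a sum of squares) for all $n\ge 4$. *)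

From HB Require Import structures.
From mathcomp Require Import all_boot all_order all_algebra.
From mathcomp Require Import reals.
From mathcomp Require Import mpoly.
Set Implicit Arguments. Unset Strict Implicit. Unset Printing Implicit Defensive.
Import Order.TTheory GRing.Theory Num.Theory.
Local Open Scope ring_scope.

Definition psum (R : realType) (n i : nat) : {mpoly R[n]} :=
  n%:R^-1 *: \sum_(j < n) 'X_j ^+ i.

(* the symmetric quartic  sum_{lambda |- 4} c_lambda p^(n)_lambda, where
   c 0 = c_(4), c 1 = c_(3,1), c 2 = c_(2,2), c 3 = c_(2,1,1), c 4 = c_(1,1,1,1) *)
Definition quartic (R : realType) (c : 'I_5 -> R) (n : nat) : {mpoly R[n]} :=
  c (inord 0) *: psum R n 4
  + c (inord 1) *: (psum R n 3 * psum R n 1)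
  + c (inord 2) *: (psum R n 2 ^+ 2)
  + c (inord 3) *: (psum R n 2 * psum R n 1 ^+ 2)
  + c (inord 4) *: (psum R n 1 ^+ 4).

Definition nonneg_poly (R : realType) (n : nat) (f : {mpoly R[n]}) : Prop :=
  forall x : 'I_n -> R, 0 <= f.@[x].

(* sum of squares of real forms (the squared forms are homogeneous
   polynomials of degree 2, the only possible degree for a quartic) *)
Definition sos_forms (R : realType) (n : nat) (f : {mpoly R[n]}) : Prop :=
  exists s : seq {mpoly R[n]},
    all (fun q => q \is 2.-homog) s /\ f = \sum_(q <- s) q ^+ 2.

Definition inP4 (R : realType) (c : 'I_5 -> R) : Prop :=
  forall n : nat, (4 <= n)%N -> nonneg_poly (quartic c n).

Definition inS4 (R : realType) (c : 'I_5 -> R) : Prop :=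
  forall n : nat, (4 <= n)%N -> sos_forms (quartic c n).

(* Write the quartic through the mean [m] and the central moments [Q2], [Q3],
   [Q4] of the coordinates.  At a two-valued point (k coordinates equal to [a],
   the others to [b]) it is a polynomial in [t = k/n]; as the ratios [k/n] are
   dense in [0,1], membership in P_4 makes it nonnegative on the whole segment.
   Every mean [m], variance [s > 0] and third moment [s w] is realised this way,
   which forces [c0 >= 0], [alpha >= 0], [delta >= 0], [gamma = 2 c0 k] and
   [alpha + (beta - c0 k^2) s + delta s^2 >= 0] for [s > 0].  Conversely, under
   these conditions the identity
     quartic = c0 mean_j (y_j^2 + k m y_j - Q2)^2
               + alpha m^4 + (beta - c0 k^2) m^2 Q2 + delta Q2^2,
   with [y_j = x_j - m] and [m^2 Q2 = mean_j (m y_j)^2], exhibits the quartic as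
   a sum of squares of quadratic forms for every [n]. *)

From HB Require Import structures.
From mathcomp Require Import all_boot all_order all_algebra.
From mathcomp Require Import reals.
From mathcomp Require Import mpoly.
From mathcomp Require Import ring lra.
Set Implicit Arguments. Unset Strict Implicit. Unset Printing Implicit Defensive.
Import Order.TTheory GRing.Theory Num.Theory.
Local Open Scope ring_scope.

(* [nu] stands for [1/n]; stating the identities over any commutative ring lets
   them be used verbatim in the polynomial ring. *)
Section CenteredMoments.
Variables (A : comPzRingType) (n : nat) (x : 'I_n -> A) (nu : A).
Hypothesis nu_n : nu * n%:R = 1.

Let mean (F : 'I_n -> A) := nu * \sum_(j < n) F j.
Let m := mean x.
Let y j := x j - m.
Let Q k := mean (fun j => y j ^+ k).

Lemma sum_centered : \sum_(j < n) y j = 0.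
Proof. by rewrite sumrB sumr_const card_ord -mulr_natl mulrA (mulrC _ nu) nu_n mul1r subrr. Qed.

Lemma mean_centered_quartic (a0 a1 a2 a3 a4 : A) :
  mean (fun j => a0 + a1 * y j + a2 * y j ^+ 2 + a3 * y j ^+ 3 + a4 * y j ^+ 4)
  = a0 + a2 * Q 2 + a3 * Q 3 + a4 * Q 4.
Proof.
rewrite /Q /mean !big_split /= -!mulr_sumr sumr_const card_ord sum_centered.
(* abstracting [n%:R] keeps [-nu_N] from firing on the [1] inside it *)
rewrite -mulr_natr; move: nu_n; set N := n%:R => nu_N.
by rewrite -[in RHS](mulr1 a0) -nu_N; ring.
Qed.

Lemma mean_pow_centered (i : nat) (a0 a1 a2 a3 a4 : A) :
  (forall z, (m + z) ^+ i = a0 + a1 * z + a2 * z ^+ 2 + a3 * z ^+ 3 + a4 * z ^+ 4) ->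
  mean (fun j => x j ^+ i) = a0 + a2 * Q 2 + a3 * Q 3 + a4 * Q 4.
Proof.
move=> expand; rewrite -(mean_centered_quartic a0 a1); congr (_ * _).
by apply: eq_bigr => j _; rewrite -expand /y; congr (_ ^+ _); ring.
Qed.

Lemma mean_pow1 : mean (fun j => x j ^+ 1) = m.
Proof. by rewrite /mean; under eq_bigr do rewrite expr1. Qed.

Lemma mean_pow2 : mean (fun j => x j ^+ 2) = m ^+ 2 + Q 2.
Proof. by rewrite (@mean_pow_centered 2 (m ^+ 2) (2%:R * m) 1 0 0) => [|z]; ring. Qed.

Lemma mean_pow3 : mean (fun j => x j ^+ 3) = m ^+ 3 + 3%:R * m * Q 2 + Q 3.
Proof. by rewrite (@mean_pow_centered 3 (m ^+ 3) (3%:R * m ^+ 2) (3%:R * m) 1 0) => [|z]; ring. Qed.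

Lemma mean_pow4 :
  mean (fun j => x j ^+ 4) = m ^+ 4 + 6%:R * m ^+ 2 * Q 2 + 4%:R * m * Q 3 + Q 4.
Proof.
rewrite (@mean_pow_centered 4 (m ^+ 4) (4%:R * m ^+ 3) (6%:R * m ^+ 2) (4%:R * m) 1).
  by rewrite mul1r.
by move=> z; ring.
Qed.

Lemma mean_sqr_centered_quadratic (k : A) :
  mean (fun j => (y j ^+ 2 + k * m * y j - Q 2) ^+ 2)
  = Q 4 + 2%:R * k * m * Q 3 + k ^+ 2 * m ^+ 2 * Q 2 - Q 2 ^+ 2.
Proof.
transitivity (mean (fun j => Q 2 ^+ 2 + (- 2%:R * k * m * Q 2) * y j
  + (k ^+ 2 * m ^+ 2 - 2%:R * Q 2) * y j ^+ 2 + 2%:R * k * m * y j ^+ 3 + 1 * y j ^+ 4)).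
  by congr (_ * _); apply: eq_bigr => j _; ring.
by rewrite mean_centered_quartic; ring.
Qed.

Lemma power_means_quartic_centered (c0 c1 c2 c3 c4 k : A) :
  4%:R * c0 + c1 = 2%:R * c0 * k ->
  c0 * mean (fun j => x j ^+ 4)
  + c1 * (mean (fun j => x j ^+ 3) * mean (fun j => x j ^+ 1))
  + c2 * mean (fun j => x j ^+ 2) ^+ 2
  + c3 * (mean (fun j => x j ^+ 2) * mean (fun j => x j ^+ 1) ^+ 2)
  + c4 * mean (fun j => x j ^+ 1) ^+ 4
  = c0 * mean (fun j => (y j ^+ 2 + k * m * y j - Q 2) ^+ 2)
    + (c0 + c1 + c2 + c3 + c4) * m ^+ 4
    + (6%:R * c0 + 3%:R * c1 + 2%:R * c2 + c3 - c0 * k ^+ 2) * m ^+ 2 * Q 2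
    + (c0 + c2) * Q 2 ^+ 2.
Proof.
move=> c1E; rewrite mean_sqr_centered_quadratic mean_pow1 mean_pow2 mean_pow3 mean_pow4.
by rewrite (_ : c1 = 2%:R * c0 * k - 4%:R * c0); [ring | rewrite -c1E; ring].
Qed.
End CenteredMoments.

Section Density.
Variable R : archiRealFieldType.

Lemma poly_bounded01 (q : {poly R}) :
  exists K, forall s : R, 0 <= s <= 1 -> `|q.[s]| <= K.
Proof.
elim/poly_ind: q => [|q c [K qK]]; first by exists 0 => s _; rewrite horner0 normr0.
exists (K + `|c|) => s /[dup] /qK qsK /andP[s0 s1].
rewrite hornerMXaddC (le_trans (ler_normD _ _)) // lerD2r normrM.
by rewrite -[leRHS]mulr1 ler_pM // ger0_norm.
Qed.

Lemma poly_lipschitz01_at (p : {poly R}) (t : R) :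
  exists K, forall s, 0 <= s <= 1 -> `|p.[s] - p.[t]| <= K * `|s - t|.
Proof.
have : root (p - p.[t]%:P) t by rewrite /root !hornerE subrr.
case/factor_theorem => q pE; have [K qK] := poly_bounded01 q.
exists K => s s01; have := congr1 (horner^~ s) pE; rewrite !hornerE => ->.
by rewrite normrM; apply: ler_wpM2r => //; exact: qK.
Qed.

Lemma nat_ratio_near (N : nat) (t e : R) : 0 <= t <= 1 -> 0 < e ->
  exists n k : nat,
    [/\ (N <= n)%N, (k <= n)%N, 0 <= (k%:R / n%:R : R) <= 1 & `|k%:R / n%:R - t| < e].
Proof.
move=> /andP[t0 t1] e0.
pose n := (Num.trunc e^-1 + N).+1.
have n0 : 0 < n%:R :> R by rewrite ltr0n.
have ne : n%:R^-1 < e.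
  rewrite invf_plt ?posrE // (lt_le_trans (truncnS_gt _)) // ler_nat.
  by rewrite ltnS leq_addr.
have nt0 : 0 <= n%:R * t := mulr_ge0 (ltW n0) t0.
have /andP[kle klt] := truncn_itv nt0; set k := Num.trunc _ in kle klt.
have kn : (k <= n)%N.
  by rewrite -(ler_nat R) (le_trans kle) // ger_pMr.
exists n, k; split => //.
- by rewrite ltnW // ltnS leq_addl.
- by rewrite divr_ge0 //= ler_pdivrMr // mul1r ler_nat.
apply: le_lt_trans ne.
rewrite (_ : _ - t = (k%:R - n%:R * t) / n%:R); last by field; rewrite gt_eqF.
rewrite normrM normfV (gtr0_norm n0) -[leRHS]mul1r ler_pM2r ?invr_gt0 //.
by rewrite ler_norml; apply/andP; split; rewrite -natr1 in klt; lra.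
Qed.

Lemma poly_ge0_01_of_ratios (p : {poly R}) (N : nat) :
  (forall n k : nat, (N <= n)%N -> (k <= n)%N -> 0 <= p.[k%:R / n%:R]) ->
  forall t, 0 <= t <= 1 -> 0 <= p.[t].
Proof.
move=> p_ge0 t t01; rewrite leNgt; apply/negP => pt_lt0.
have [K Klip] := poly_lipschitz01_at p t.
have e0 : 0 < - p.[t] / (`|K| + 1) by rewrite divr_gt0 ?oppr_gt0 ?ltr_pwDr.
have [n [k [Nn kn r01 near]]] := nat_ratio_near N t01 e0.
have := Klip _ r01; have := p_ge0 _ _ Nn kn.
set r := k%:R / n%:R in r01 near *; set d := `|r - t| in near *.
have : K * d <= (`|K| + 1) * d.
  by apply: ler_wpM2r; [exact: normr_ge0 | have := ler_norm K; lra].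
rewrite ltr_pdivlMr ?ltr_pwDr // mulrC in near.
rewrite ler_norml; lra.
Qed.
End Density.

Section Quadratics.
Variables (F : realFieldType) (a b c : F).

Lemma quadratic_ge0_coef :
  (forall w, 0 <= a * w ^+ 2 + b * w + c) -> 0 <= a /\ (a = 0 -> b = 0).
Proof.
move=> q_ge0; have c0 : 0 <= c by have := q_ge0 0; rewrite expr0n /=; lra.
split.
  rewrite leNgt; apply/negP => a_lt0.
  pose w := 1 + (`|b| + c) / - a.
  have w1 : 1 <= w by rewrite lerDl divr_ge0 ?oppr_ge0 ?addr_ge0 // ltW.
  have aw : a * w = a - `|b| - c by rewrite /w; field; rewrite lt_eqF.
  have := q_ge0 w; have := ler_norm b; nra.
move=> a0; apply/eqP; apply/negPn/negP => b_neq0.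
have := q_ge0 (- (c + 1) / b); rewrite a0 mul0r add0r mulrC divfK //; lra.
Qed.

Lemma quadratic_ge0_pos : 0 <= c ->
  (forall s, 0 < s -> 0 <= a + b * s + c * s ^+ 2) ->
  0 <= b \/ (0 < a /\ b ^+ 2 <= 4%:R * a * c).
Proof.
move=> c_ge0 q_ge0; case: (lerP 0 b) => [|b_lt0]; [by left | right].
have b2 : 0 < b ^+ 2 by rewrite exprn_even_gt0 //= lt_eqF.
case: (ltrP 0 c) => [c_gt0 | c_le0].
  have := q_ge0 (- b / (2%:R * c)); rewrite divr_gt0 ?oppr_gt0 ?mulr_gt0 // => /(_ isT).
  have -> : a + b * (- b / (2%:R * c)) + c * (- b / (2%:R * c)) ^+ 2
          = (4%:R * a * c - b ^+ 2) / (4%:R * c) by field; rewrite gt_eqF.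
  have c4 : 0 < 4%:R * c by rewrite mulr_gt0.
  move/(mulr_ge0 (ltW c4)); rewrite mulrC divfK ?gt_eqF // => disc.
  split; [nra | lra].
have := q_ge0 ((`|a| + 1) / - b); rewrite divr_gt0 ?oppr_gt0 ?ltr_pwDr // => /(_ isT).
have -> : b * ((`|a| + 1) / - b) = - (`|a| + 1) by field; rewrite lt_eqF.
have -> : c = 0 by lra.
by have := ler_norm a; lra.
Qed.
End Quadratics.

Section SumsOfSquares.
Variables (R : realType) (n : nat).
Implicit Types (f g p q : {mpoly R[n]}).

Lemma dhomog_mpolyCM (d : nat) (a : R) p : p \is d.-homog -> a%:MP * p \is d.-homog.
Proof. by rewrite mul_mpolyC; apply: dhomogZ. Qed.

Lemma sos_forms0 : sos_forms (0 : {mpoly R[n]}).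
Proof. by exists [::]; rewrite big_nil. Qed.

Lemma sos_formsD f g : sos_forms f -> sos_forms g -> sos_forms (f + g).
Proof.
move=> [s [hs ->]] [t [ht ->]]; exists (s ++ t).
by rewrite all_cat hs ht big_cat.
Qed.

Lemma sos_forms_sum (I : Type) (r : seq I) (F : I -> {mpoly R[n]}) :
  (forall i, sos_forms (F i)) -> sos_forms (\sum_(i <- r) F i).
Proof.
move=> sosF; elim: r => [|i r IH]; first by rewrite big_nil; exact: sos_forms0.
by rewrite big_cons; apply: sos_formsD.
Qed.

Lemma sos_formsZ (a : R) f : 0 <= a -> sos_forms f -> sos_forms (a%:MP * f).
Proof.
move=> a_ge0 [s [hs ->]]; exists [seq (Num.sqrt a)%:MP * q | q <- s]; split.
  by apply/allP => _ /mapP[q qs ->]; apply: dhomog_mpolyCM; exact: (allP hs).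
rewrite big_map mulr_sumr; apply: eq_bigr => q _.
by rewrite exprMn -rmorphXn /= sqr_sqrtr.
Qed.

Lemma sos_forms_sqr q : q \is 2.-homog -> sos_forms (q ^+ 2).
Proof. by move=> hq; exists [:: q]; rewrite /= hq big_seq1. Qed.

Lemma sos_forms_quadratic p q (a b c : R) :
  p \is 2.-homog -> q \is 2.-homog -> sos_forms (p * q) -> 0 <= a -> 0 <= c ->
  0 <= b \/ (0 < a /\ b ^+ 2 <= 4%:R * a * c) ->
  sos_forms (a%:MP * p ^+ 2 + b%:MP * (p * q) + c%:MP * q ^+ 2).
Proof.
move=> hp hq sos_pq a_ge0 c_ge0 [b_ge0 | [a_gt0 disc]].
  by apply: sos_formsD; [apply: sos_formsD|]; apply: sos_formsZ => //; apply: sos_forms_sqr.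
set e := b / (2%:R * a); set d := c - b ^+ 2 / (4%:R * a).
have d_ge0 : 0 <= d by rewrite subr_ge0 ler_pdivrMr ?mulr_gt0 //; nra.
have -> : a%:MP * p ^+ 2 + b%:MP * (p * q) + c%:MP * q ^+ 2
        = a%:MP * (p + e%:MP * q) ^+ 2 + d%:MP * q ^+ 2.
  have bE : b = 2%:R * a * e by rewrite /e; field; rewrite gt_eqF.
  have cE : c = a * e ^+ 2 + d by rewrite /d /e; field; rewrite gt_eqF.
  by rewrite bE cE !(rmorphD, rmorphM, rmorphXn) /=; ring.
apply: sos_formsD; apply: sos_formsZ => //; apply: sos_forms_sqr => //.
by apply: rpredD => //; apply: dhomog_mpolyCM.
Qed.

Lemma sos_forms_nonneg f : sos_forms f -> nonneg_poly f.
Proof.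
move=> [s [_ ->]] v; rewrite raddf_sum /=; apply: sumr_ge0 => q _.
by rewrite rmorphXn /= sqr_ge0.
Qed.
End SumsOfSquares.

Definition twoval (R : Type) (n k : nat) (a b : R) (j : 'I_n) : R :=
  if (j < k)%N then a else b.
Arguments twoval {R} n k a b j.

Definition psum_line (R : nzRingType) (a b : R) (i : nat) : {poly R} :=
  (b ^+ i)%:P + (a ^+ i - b ^+ i) *: 'X.

Definition quartic_line (R : nzRingType) (c : 'I_5 -> R) (a b : R) : {poly R} :=
  c (inord 0) *: psum_line a b 4
  + c (inord 1) *: (psum_line a b 3 * psum_line a b 1)
  + c (inord 2) *: (psum_line a b 2 ^+ 2)
  + c (inord 3) *: (psum_line a b 2 * psum_line a b 1 ^+ 2)
  + c (inord 4) *: (psum_line a b 1 ^+ 4).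

Lemma meval_psum_twoval (R : realType) (n k i : nat) (a b : R) :
  (0 < n)%N -> (k <= n)%N ->
  (psum R n i).@[twoval n k a b] = (psum_line a b i).[k%:R / n%:R].
Proof.
move=> n0 kn; rewrite /psum mevalZ raddf_sum /=.
rewrite (eq_bigr (fun j : 'I_n => twoval n k a b j ^+ i)) => [|j _]; last first.
  by rewrite rmorphXn /= mevalXU.
rewrite /twoval -(big_mkord xpredT (fun j => (if (j < k)%N then a else b) ^+ i)).
rewrite (big_cat_nat (leq0n k) kn) /=.
rewrite (@eq_big_nat _ _ _ 0 k _ (fun=> a ^+ i)); last by move=> j /andP[_ ->].
rewrite (@eq_big_nat _ _ _ k n _ (fun=> b ^+ i)); last first.
  by move=> j /andP[kj _]; rewrite ltnNge kj.
rewrite !sumr_const_nat subn0 /psum_line hornerD hornerC hornerZ hornerX.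
rewrite -[_ *+ k]mulr_natr -[_ *+ (n - k)]mulr_natr natrB //.
by field; rewrite pnatr_eq0 -lt0n.
Qed.

Lemma meval_quartic_twoval (R : realType) (c : 'I_5 -> R) (n k : nat) (a b : R) :
  (0 < n)%N -> (k <= n)%N ->
  (quartic c n).@[twoval n k a b] = (quartic_line c a b).[k%:R / n%:R].
Proof.
move=> n0 kn; rewrite /quartic /quartic_line !mevalD !(mevalZ _ (c _)) !mevalM.
by rewrite !meval_psum_twoval // !hornerE.
Qed.

Section QuarticConditions.
Variables (R : realType) (c : 'I_5 -> R).
Local Notation c0 := (c (inord 0)).
Local Notation c1 := (c (inord 1)).
Local Notation c2 := (c (inord 2)).
Local Notation c3 := (c (inord 3)).
Local Notation c4 := (c (inord 4)).

Definition alpha := c0 + c1 + c2 + c3 + c4.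
Definition beta := 6%:R * c0 + 3%:R * c1 + 2%:R * c2 + c3.
Definition gamma := 4%:R * c0 + c1.
Definition delta := c0 + c2.

(* The quartic at a point with mean [m], second central moment [s] and third
   central moment [s * w], when its fourth central moment is [s * (w ^+ 2 + s)],
   as happens at two-valued points. *)
Definition quartic_moments (m w s : R) :=
  c0 * s * w ^+ 2 + gamma * s * w * m + beta * s * m ^+ 2 + delta * s ^+ 2 + alpha * m ^+ 4.

Lemma horner_quartic_line (a b t : R) :
  (quartic_line c a b).[t]
  = quartic_moments (b + t * (a - b)) ((1 - 2%:R * t) * (a - b)) (t * (1 - t) * (a - b) ^+ 2).
Proof.
rewrite /quartic_line /psum_line !(hornerD, hornerZ, hornerM, horner_exp, hornerC, hornerX).
by rewrite /quartic_moments /alpha /beta /gamma /delta; ring.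
Qed.

Definition quartic_sos_cond (k : R) :=
  [/\ gamma = 2%:R * c0 * k, 0 <= c0, 0 <= alpha, 0 <= delta &
      0 <= beta - c0 * k ^+ 2 \/ (0 < alpha /\ (beta - c0 * k ^+ 2) ^+ 2 <= 4%:R * alpha * delta)].

Hypothesis line_ge0 : forall a b t, 0 <= t <= 1 -> 0 <= (quartic_line c a b).[t].

Lemma alpha_ge0 : 0 <= alpha.
Proof.
have := line_ge0 1 1 (t := 0); rewrite lexx ler01 horner_quartic_line => /(_ isT).
by rewrite /quartic_moments; congr (_ <= _); ring.
Qed.

Lemma quartic_moments_ge0 (m w s : R) : 0 < s -> 0 <= quartic_moments m w s.
Proof.
move=> s_gt0; set r := Num.sqrt (w ^+ 2 + 4%:R * s).
have r2 : r ^+ 2 = w ^+ 2 + 4%:R * s by rewrite sqr_sqrtr //; nra.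
have r_gt0 : 0 < r by rewrite sqrtr_gt0; nra.
have wr : w <= r by nra.
have wr' : - w <= r by nra.
pose t := (r - w) / (2%:R * r).
have tr : t * r = (r - w) / 2%:R by rewrite /t; field; rewrite gt_eqF.
have t01 : 0 <= t <= 1.
  by rewrite divr_ge0 ?ler_pdivrMr ?mulr_gt0 //=; nra.
have := line_ge0 (m - t * r + r) (m - t * r) t01; rewrite horner_quartic_line.
congr (_ <= quartic_moments _ _ _); first by ring.
  by transitivity (r - 2%:R * (t * r)); [ring | rewrite tr; field].
transitivity ((t * r) * (r - t * r)); first by ring.
transitivity ((r ^+ 2 - w ^+ 2) / 4%:R); first by rewrite tr; field.
by rewrite r2; field.
Qed.

Lemma quartic_sos_cond_exists : exists k, quartic_sos_cond k.
Proof.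
have [c0_ge0 c0_gamma] : 0 <= c0 /\ (c0 = 0 -> gamma = 0).
  apply: (quadratic_ge0_coef (c := beta + delta + alpha)) => w.
  have := quartic_moments_ge0 1 w ltr01.
  by rewrite /quartic_moments; congr (_ <= _); ring.
have delta_ge0 : 0 <= delta.
  by have := quartic_moments_ge0 0 0 ltr01; rewrite /quartic_moments; congr (_ <= _); ring.
pose k := if c0 == 0 then 0 else gamma / (2%:R * c0).
have gammaE : gamma = 2%:R * c0 * k.
  by rewrite /k; case: eqP => [/c0_gamma -> | /eqP c0_neq0]; [ring | field].
exists k; split => //; first exact: alpha_ge0.
apply: quadratic_ge0_pos delta_ge0 _ => s s_gt0.
have := quartic_moments_ge0 1 (- k) s_gt0.
by rewrite /quartic_moments gammaE; congr (_ <= _); ring.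
Qed.
End QuarticConditions.

Lemma quartic_line_ge0_of_inP4 (R : realType) (c : 'I_5 -> R) : inP4 c ->
  forall a b t, 0 <= t <= 1 -> 0 <= (quartic_line c a b).[t].
Proof.
move=> P4c a b; apply: (@poly_ge0_01_of_ratios _ _ 4) => n k n4 kn.
rewrite -meval_quartic_twoval //; [exact: P4c | exact: leq_trans n4].
Qed.

Lemma sos_quartic_of_cond (R : realType) (c : 'I_5 -> R) (k : R) (n : nat) :
  quartic_sos_cond c k -> (0 < n)%N -> sos_forms (quartic c n).
Proof.
move=> [gammaE c0_ge0 alpha_ge0 delta_ge0 beta_cond] n_gt0.
pose nu : {mpoly R[n]} := (n%:R^-1)%:MP.
have nu_n : nu * n%:R = 1 by rewrite -mpolyC_nat -mpolyCM mulVf ?pnatr_eq0 -?lt0n ?rmorph1.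
pose x j : {mpoly R[n]} := 'X_j.
pose m := nu * \sum_(j < n) x j.
pose Q2 := nu * \sum_(j < n) (x j - m) ^+ 2.
pose G j := (x j - m) ^+ 2 + k%:MP * m * (x j - m) - Q2.
have hx j : x j \is 1.-homog by rewrite dhomogX; apply/eqP; exact: mdeg1.
have hm : m \is 1.-homog by apply: dhomog_mpolyCM; apply: rpred_sum => j _.
have hy j : x j - m \is 1.-homog by apply: rpredB.
have hQ2 : Q2 \is 2.-homog.
  by apply: dhomog_mpolyCM; apply: rpred_sum => j _; apply: (dhomogMn (d := 1)).
have hm2 : m ^+ 2 \is 2.-homog by apply: (dhomogMn (d := 1)).
have hG j : G j \is 2.-homog.
  rewrite /G -mulrA; apply: rpredB => //; apply: rpredD; first exact: (dhomogMn (d := 1)).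
  by apply: dhomog_mpolyCM; apply: (dhomogM (d := 1)).
have -> : quartic c n = (c (inord 0) / n%:R)%:MP * \sum_(j < n) G j ^+ 2
    + ((alpha c)%:MP * (m ^+ 2) ^+ 2 + (beta c - c (inord 0) * k ^+ 2)%:MP * (m ^+ 2 * Q2)
       + (delta c)%:MP * Q2 ^+ 2).
  have gammaE' : 4%:R * (c (inord 0))%:MP + (c (inord 1))%:MP
               = 2%:R * (c (inord 0))%:MP * k%:MP :> {mpoly R[n]}.
    by rewrite -!mpolyC_nat -!mpolyCM -rmorphD -/(gamma c) gammaE.
  rewrite /quartic /psum -!mul_mpolyC (power_means_quartic_centered x nu_n _ _ _ gammaE').
  rewrite /alpha /beta /delta !(rmorphD, rmorphB, rmorphM, rmorphXn) /= !rmorph1.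
  by rewrite -/nu -/m -/Q2 /G; ring.
apply: sos_formsD.
  apply: sos_formsZ; first by rewrite divr_ge0.
  by apply: sos_forms_sum => j; apply: sos_forms_sqr.
apply: sos_forms_quadratic => //.
have -> : m ^+ 2 * Q2 = (n%:R^-1)%:MP * \sum_(j < n) (m * (x j - m)) ^+ 2.
  rewrite -/nu /Q2 mulrCA mulr_sumr; congr (_ * _).
  by apply: eq_bigr => j _; rewrite [RHS]exprMn.
apply: sos_formsZ; first by rewrite invr_ge0.
by apply: sos_forms_sum => j; apply: sos_forms_sqr; apply: (dhomogM (d := 1)).
Qed.

Theorem theorem1p3 (R : realType) (c : 'I_5 -> R) : inP4 c <-> inS4 c.
Proof.
split=> [P4c n n4 | S4c n n4]; last exact: sos_forms_nonneg (S4c n n4).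
have [k cond] := quartic_sos_cond_exists (quartic_line_ge0_of_inP4 P4c).
exact: sos_quartic_of_cond cond (leq_trans _ n4).
Qed.
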